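(* Let $A$ be a group and $\phi$ a surjective, proper virtual endomorphism of $A$. Let $\Gamma\le\mathrm{Aut}(A)$ be such that $\phi$ and $\Gamma$ are mutually stable. Then the action of $A\rtimes\Gamma$ on $\mathcal{T}_\phi$ is self-similar.
   Context: A virtual endomorphism of a group $A$ is a homomorphism $\phi$ from a finite index subgroup of $A$ to $A$; write $\phi^{-n}(A)$ for the iterated preimages ($\phi^{-0}(A)=A$). $\phi$ is proper if $\bigcap_{n}\phi^{-n}(A)=\{1\}$; a proper virtual endomorphism is injective, so a surjective proper one is a bijection from $\phi^{-1}(A)$ onto $A$. For $\Gamma\le\mathrm{Aut}(A)$, $\phi$ is $\Gamma$-stable if $\gamma(\phi^{-n}(A))=\phi^{-n}(A)$ for all $\gamma\in\Gamma$, $n\in\mathbb{N}$. For bijective $\phi$, $\phi$ and $\Gamma$ are mutually stable if $\phi$ is $\Gamma$-stable and, for each $\gamma\in\Gamma$, the automorphism $\phi\circ\gamma|_{\phi^{-1}(A)}\circ\phi^{-1}$ of $A$ lies in $\Gamma$. The tree of cosets $\mathcal{T}_\phi$ has vertex set $\coprod_{n\ge0}A/\phi^{-n}(A)$ with edges from $a\phi^{-n}(A)$ to $a\phi^{-(n+1)}(A)$; $A\rtimes\Gamma$ acts on it by $(a,\gamma).(a'\phi^{-n}(A))=a\gamma(a')\phi^{-n}(A)$. When $\phi$ is surjective, $\mathcal{T}_\phi$ is isomorphic to the rooted $d$-regular tree $\mathcal{T}_d$ with $d=[A:\phi^{-1}(A)]$. Self-similarity of the action means: writing $B=\phi^{-1}(A)$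 and choosing a transversal $T$ of $A/B$, identify for each $t\in T$ the subtree of $\mathcal{T}_\phi$ rooted at $tB$ (all cosets contained in $tB$) with $\mathcal{T}_\phi$ via $\delta_{tB}: a\phi^{-(n+1)}(A)\mapsto \phi(t^{-1}a)\phi^{-n}(A)$; then for every $g\in A\rtimes\Gamma$ and every $t\in T$, if $g$ sends $tB$ to $t'B$ ($t'\in T$), the tree automorphism $\delta_{t'B}\circ g\circ\delta_{tB}^{-1}$ of $\mathcal{T}_\phi$ is the action of some element of $A\rtimes\Gamma$. (Equivalently, the induced action of $A\rtimes \Gamma$ on $\mathcal{T}_d$ under the corresponding identification has image a self-similar subgroup of $\mathrm{Aut}(\mathcal{T}_d)$, i.e. one closed under taking level-1 states.) *)

From Stdlib Require Import List.
Import ListNotations.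
Set Implicit Arguments.

Record Group := {
  carrier :> Type;
  mul : carrier -> carrier -> carrier;
  one : carrier;
  inv : carrier -> carrier;
  mulA : forall x y z, mul x (mul y z) = mul (mul x y) z;
  mul1g : forall x, mul one x = x;
  mulVg : forall x, mul (inv x) x = one
}.

Section Defs.
Variable A : Group.
Local Notation "x * y" := (mul A x y).
Local Notation "x ^-1" := (inv A x) (at level 3).
Local Notation "1" := (one A).

Definition is_subgroup (B : A -> Prop) : Prop :=
  B 1 /\ (forall x y, B x -> B y -> B (x * y)) /\ (forall x, B x -> B (x^-1)).

Definition finite_index (B : A -> Prop) : Prop :=
  exists l : list A, forall a, exists t, In t l /\ B (t^-1 * a).

(** A virtual endomorphism: a homomorphism phi : B -> A defined on a
    finite index subgroup B (phi is a total function, only its values on B matter). *)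
Definition virtual_endo (B : A -> Prop) (phi : A -> A) : Prop :=
  is_subgroup B /\ finite_index B /\
  (forall x y, B x -> B y -> phi (x * y) = phi x * phi y).

Fixpoint preim (B : A -> Prop) (phi : A -> A) (n : nat) : A -> Prop :=
  match n with
  | O => fun _ => True
  | S m => fun a => B a /\ preim B phi m (phi a)
  end.

Definition proper_ve (B : A -> Prop) (phi : A -> A) : Prop :=
  forall a, (forall n, preim B phi n a) -> a = 1.

Definition surjective_ve (B : A -> Prop) (phi : A -> A) : Prop :=
  forall a, exists b, B b /\ phi b = a.

Definition is_aut (g : A -> A) : Prop :=
  (forall x y, g (x * y) = g x * g y) /\
  (forall x y, g x = g y -> x = y) /\ (forall y, exists x, g x = y).

Definition is_aut_subgroup (Gam : (A -> A) -> Prop) : Prop :=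
  (forall g, Gam g -> is_aut g) /\
  Gam (fun a => a) /\
  (forall g h, Gam g -> Gam h -> Gam (fun a => g (h a))) /\
  (forall g, Gam g -> exists h, Gam h /\ forall a, h (g a) = a /\ g (h a) = a).

Definition maps_onto (g : A -> A) (S : A -> Prop) : Prop :=
  (forall a, S a -> S (g a)) /\ (forall b, S b -> exists a, S a /\ g a = b).

Definition Gamma_stable (B : A -> Prop) (phi : A -> A) (Gam : (A -> A) -> Prop) : Prop :=
  forall g n, Gam g -> maps_onto g (preim B phi n).

(** Mutual stability (phi bijective B -> A): phi o g|_B o phi^{-1} lies in Gamma,
    i.e. there is h in Gamma with h (phi b) = phi (g b) for all b in B. *)
Definition mutually_stable (B : A -> Prop) (phi : A -> A) (Gam : (A -> A) -> Prop) : Prop :=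
  Gamma_stable B phi Gam /\
  forall g, Gam g -> exists h, Gam h /\ forall b, B b -> h (phi b) = phi (g b).

(** Tree of cosets T_phi: a vertex of level n is a coset x phi^{-n}(A), given by a
    representative x; two representatives give the same vertex iff they are
    congruent modulo phi^{-n}(A). *)
Definition same_vertex (B : A -> Prop) (phi : A -> A) (n : nat) (x y : A) : Prop :=
  preim B phi n (x^-1 * y).

(** Action of (a, g) in A x| Gamma on representatives: x phi^{-n}A |-> a g(x) phi^{-n}A. *)
Definition sd_act (a : A) (g : A -> A) (x : A) : A := a * g x.

(** delta_{tB}: y phi^{-(n+1)}(A) |-> phi(t^-1 y) phi^{-n}(A), on representatives. *)
Definition delta (phi : A -> A) (t y : A) : A := phi (t^-1 * y).

Definition transversal (B : A -> Prop) (T : A -> Prop) : Prop :=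
  forall a, exists t, (T t /\ B (t^-1 * a)) /\
    forall t', T t' /\ B (t'^-1 * a) -> t' = t.

(** Self-similarity of the action of A x| Gamma on T_phi with respect to the
    transversal T: for every g = (a, ga) and t in T, with g (tB) = t'B, t' in T,
    the tree automorphism delta_{t'B} o g o delta_{tB}^{-1} of T_phi coincides,
    on every vertex, with the action of some (a', ga') in A x| Gamma.
    Every vertex of level n of T_phi is delta_{tB}(y phi^{-(n+1)}A) with y in tB. *)
Definition self_similar_action (B : A -> Prop) (phi : A -> A)
    (Gam : (A -> A) -> Prop) (T : A -> Prop) : Prop :=
  forall (a : A) (ga : A -> A) (t t' : A),
    Gam ga -> T t -> T t' ->
    same_vertex B phi 1 (sd_act a ga t) t' ->
    exists (a' : A) (ga' : A -> A), Gam ga' /\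
      forall (n : nat) (y : A), same_vertex B phi 1 t y ->
        same_vertex B phi n (delta phi t' (sd_act a ga y))
                            (sd_act a' ga' (delta phi t y)).

End Defs.

Arguments is_subgroup {A}.
Arguments finite_index {A}.
Arguments virtual_endo {A}.
Arguments preim {A}.
Arguments proper_ve {A}.
Arguments surjective_ve {A}.
Arguments is_aut {A}.
Arguments is_aut_subgroup {A}.
Arguments maps_onto {A}.
Arguments Gamma_stable {A}.
Arguments mutually_stable {A}.
Arguments same_vertex {A}.
Arguments sd_act {A}.
Arguments delta {A}.
Arguments transversal {A}.
Arguments self_similar_action {A}.


(* The state of [(a, g)] at the vertex [tB] is explicit: if [a g(t) B = t' B]
   then [c := t'^-1 a g(t)] lies in [B], and writing [y = t b] with [b] in [B],
   [phi (t'^-1 a g(t b)) = phi (c g(b)) = phi c * phi (g b) = phi c * h (phi b)],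
   where [h = phi o g o phi^-1] lies in [Gamma] by mutual stability.  So the
   state is [(phi c, h)], with equality already on representatives.  Surjectivity and
   properness of [phi] only serve to make [T_phi] a regular rooted tree; the
   self-similarity computation does not use them, nor the transversal. *)

Section GroupFacts.
Variable A : Group.
Local Notation "x * y" := (mul A x y).
Local Notation "x ^-1" := (inv A x) (at level 3).
Local Notation "1" := (one A).

Lemma mulgV (x : A) : x * x^-1 = 1.
Proof.
  assert (Hidem : (x * x^-1) * (x * x^-1) = x * x^-1).
  { rewrite <- mulA, (mulA A x^-1 x), mulVg, mul1g. reflexivity. }
  rewrite <- (mulVg A (x * x^-1)). rewrite <- Hidem at 3.
  rewrite mulA, mulVg, mul1g. reflexivity.
Qed.

Lemma mulg1 (x : A) : x * 1 = x.
Proof. rewrite <- (mulVg A x), mulA, mulgV, mul1g. reflexivity. Qed.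

Lemma mulKg (x y : A) : x * (x^-1 * y) = y.
Proof. rewrite mulA, mulgV, mul1g. reflexivity. Qed.

Lemma mulg_invl (x y : A) : x * y = 1 -> y = x^-1.
Proof.
  intro Hxy.
  rewrite <- (mul1g A y), <- (mulVg A x), <- mulA, Hxy, mulg1. reflexivity.
Qed.

Lemma invgK (x : A) : (x^-1)^-1 = x.
Proof. symmetry. apply mulg_invl, mulVg. Qed.

Lemma invgM (x y : A) : (x * y)^-1 = y^-1 * x^-1.
Proof.
  symmetry. apply mulg_invl.
  rewrite <- mulA, (mulA A y), mulgV, mul1g, mulgV. reflexivity.
Qed.

Lemma mulg_cancelr (z x y : A) : x * z = y * z -> x = y.
Proof.
  intro Hxy.
  rewrite <- (mulg1 x), <- (mulg1 y), <- (mulgV z), !mulA, Hxy. reflexivity.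
Qed.

End GroupFacts.

Arguments mulgV {A}.
Arguments mulg1 {A}.
Arguments mulKg {A}.
Arguments mulg_invl {A}.
Arguments invgK {A}.
Arguments invgM {A}.
Arguments mulg_cancelr {A}.

Section Preimages.
Variable A : Group.
Local Notation "x * y" := (mul A x y).
Local Notation "x ^-1" := (inv A x) (at level 3).
Local Notation "1" := (one A).

Variables (B : A -> Prop) (phi : A -> A).
Hypothesis B_subgroup : is_subgroup B.
Hypothesis phiM : forall x y, B x -> B y -> phi (x * y) = phi x * phi y.

Lemma phi1 : phi 1 = 1.
Proof.
  destruct B_subgroup as [B1 _].
  apply (mulg_cancelr (phi 1)). rewrite mul1g, <- phiM, mul1g by exact B1.
  reflexivity.
Qed.

Lemma phiV (x : A) : B x -> phi x^-1 = (phi x)^-1.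
Proof.
  destruct B_subgroup as [_ [_ BV]]. intro Bx.
  apply mulg_invl. rewrite <- phiM, mulgV, phi1 by auto. reflexivity.
Qed.

Lemma preim_subgroup (n : nat) : is_subgroup (preim B phi n).
Proof.
  destruct B_subgroup as [B1 [BM BV]].
  induction n as [| n [P1 [PM PV]]]; simpl.
  - repeat split; auto.
  - split; [| split].
    + split; [exact B1 | rewrite phi1; exact P1].
    + intros x y [Bx Px] [By Py]. split; [auto | rewrite phiM by assumption; auto].
    + intros x [Bx Px]. split; [auto | rewrite phiV by assumption; auto].
Qed.

Lemma same_vertex_refl (n : nat) (x : A) : same_vertex B phi n x x.
Proof.
  unfold same_vertex. rewrite mulVg. apply preim_subgroup.
Qed.

Lemma same_vertex_sym (n : nat) (x y : A) :
  same_vertex B phi n x y -> same_vertex B phi n y x.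
Proof.
  unfold same_vertex. intro Hxy.
  destruct (preim_subgroup n) as [_ [_ PV]].
  apply PV in Hxy. rewrite invgM, invgK in Hxy. exact Hxy.
Qed.

Lemma delta_sd_act (a t t' : A) (g h : A -> A) (y : A) :
  (forall x z, g (x * z) = g x * g z) ->
  (forall b, B b -> B (g b)) ->
  (forall b, B b -> h (phi b) = phi (g b)) ->
  B (t'^-1 * (a * g t)) -> B (t^-1 * y) ->
  delta phi t' (sd_act a g y) = sd_act (phi (t'^-1 * (a * g t))) h (delta phi t y).
Proof.
  intros gM gB hphi Bc Bb. unfold delta, sd_act.
  set (b := t^-1 * y) in *.
  replace y with (t * b) by apply mulKg.
  rewrite gM, (mulA A a), (mulA A t'^-1), phiM, hphi by auto.
  reflexivity.
Qed.

End Preimages.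

Arguments same_vertex_refl {A B phi}.
Arguments same_vertex_sym {A B phi}.
Arguments delta_sd_act {A B phi}.

Theorem lemma4p4 (A : Group) (B : A -> Prop) (phi : A -> A) (Gam : (A -> A) -> Prop) :
  virtual_endo B phi ->
  surjective_ve B phi ->
  proper_ve B phi ->
  is_aut_subgroup Gam ->
  mutually_stable B phi Gam ->
  forall T : A -> Prop, transversal B T ->
  self_similar_action B phi Gam T.
Proof.
  intros [B_subgroup [_ phiM]] _ _ [Gam_aut _] [Gam_stable conj_in_Gam] T _.
  intros a g t t' Gg _ _ Hmove.
  destruct (conj_in_Gam g Gg) as [h [Gh hphi]].
  destruct (Gam_aut g Gg) as [gM _].
  assert (gB : forall b, B b -> B (g b)).
  { intros b Bb. destruct (Gam_stable g 1 Gg) as [g_preim1 _].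
    apply (g_preim1 b (conj Bb I)). }
  apply (same_vertex_sym B_subgroup phiM 1) in Hmove.
  destruct Hmove as [Bc _].
  exists (phi (mul A (inv A t') (mul A a (g t)))), h. split; [exact Gh |].
  intros n y [Bb _].
  rewrite (delta_sd_act phiM a t t' g h y gM gB hphi Bc Bb).
  apply (same_vertex_refl B_subgroup phiM).
Qed.
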